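(* Let $n\ge m\ge1$. Then for all Banach spaces $X,Y$ and all bounded linear operators $T:X\to Y$, $$\tau(T|\mathcal H(\mathbb D_{m+1}^{n+1}))\le\tau(T|\mathcal H(\mathbb D_m^n)).$$
   Context: Dyadic intervals: $\Delta_k^{(j)}:=[\frac{j-1}{2^k},\frac{j}{2^k})$. Haar functions: for $k\ge1$, integer $j$, $\chi_k^{(j)}(t)=+2^{(k-1)/2}$ on $\Delta_k^{(2j-1)}$, $-2^{(k-1)/2}$ on $\Delta_k^{(2j)}$, $0$ otherwise, $t\in[0,1)$. $\mathbb D_m^n:=\{(k,j):k=m,\dots,n;\ j=1,\dots,2^{k-1}\}$. For a finite set $\mathbb F$ of such indices and bounded linear $T:X\to Y$, $\tau(T|\mathcal H(\mathbb F))$ is the least $c\ge0$ such that $\|\sum_{(k,j)\in\mathbb F}Tx_k^{(j)}\chi_k^{(j)}|L_2\|\le c(\sum_{(k,j)\in\mathbb F}\|x_k^{(j)}\|^2)^{1/2}$ for all $x_k^{(j)}\in X$, where $\|\cdot|L_2\|$ is the Bochner $L_2([0,1),Y)$ norm. *)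

From HB Require Import structures.
From mathcomp Require Import all_boot all_order all_algebra.
From mathcomp Require Import all_classical all_reals all_analysis.
Set Implicit Arguments. Unset Strict Implicit. Unset Printing Implicit Defensive.
Import Order.TTheory GRing.Theory Num.Theory.
Import numFieldNormedType.Exports.
Local Open Scope classical_set_scope.
Local Open Scope ring_scope.

Definition in_dyadic {R : realType} (k j : nat) (t : R) : bool :=
  ((j.-1)%:R / 2 ^+ k <= t) && (t < j%:R / 2 ^+ k).

Definition haar {R : realType} (k j : nat) (t : R) : R :=
  if in_dyadic k (2 * j - 1) t then Num.sqrt (2 ^+ k.-1)
  else if in_dyadic k (2 * j) t then - Num.sqrt (2 ^+ k.-1)
  else 0.

Definition Dmn (m n : nat) : seq (nat * nat) :=
  [seq (k, j) | k <- iota m (n.+1 - m), j <- iota 1 (2 ^ k.-1)].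

(* The Haar-type inequality with constant c on the index set F:
   || sum_{(k,j) in F} T x_k^{(j)} chi_k^{(j)} | L_2([0,1),Y) ||
        <= c (sum_{(k,j) in F} ||x_k^{(j)}||^2)^{1/2},
   where the Bochner L_2 norm is (int_[0,1) ||f(t)||^2 dt)^{1/2}; the
   inequality between nonnegative quantities is stated after squaring,
   in the extended reals, to avoid taking [fine] of the integral. *)
Definition haar_ineq {R : realType} {X Y : normedModType R}
  (T : X -> Y) (F : seq (nat * nat)) (c : R) : Prop :=
  forall x : nat -> nat -> X,
    (\int[@lebesgue_measure R]_(t in `[0%R, 1%R[)
        ((`| \sum_(kj <- F) (haar kj.1 kj.2 t) *: T (x kj.1 kj.2) | ^+ 2)%:E)
     <= ((c * Num.sqrt (\sum_(kj <- F) `| x kj.1 kj.2 | ^+ 2)) ^+ 2)%:E)%E.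

Definition tau {R : realType} {X Y : normedModType R}
  (T : X -> Y) (F : seq (nat * nat)) : R :=
  inf [set c : R | 0 <= c /\ haar_ineq T F c].

Definition bounded_op {R : realType} {X Y : normedModType R} (T : X -> Y) : Prop :=
  exists M : R, forall x : X, `| T x | <= M * `| x |.

From HB Require Import structures.
From mathcomp Require Import all_boot all_order all_algebra.
From mathcomp Require Import all_classical all_reals all_analysis.
From mathcomp Require Import measurable_realfun ring lra zify.
Import Order.TTheory GRing.Theory Num.Theory.
Import numFieldNormedType.Exports.
Local Open Scope classical_set_scope.
Local Open Scope ring_scope.

(* The Haar functions of level k+1 are rescaled copies of those of level k:
   chi_{k+1}^{(j)}(t) = sqrt 2 chi_k^{(j)}(2t) and
   chi_{k+1}^{(j+2^{k-1})}(t) = sqrt 2 chi_k^{(j)}(2t-1).  So a Haar sum over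
   D_{m+1}^{n+1} is sqrt 2 times a Haar sum over D_m^n evaluated at 2t on
   [0,1/2) and another one evaluated at 2t-1 on [1/2,1); the change of
   variables u = 2t - a shows that its squared L_2 norm is the sum of the
   squared L_2 norms of these two sums.  Adding the inequalities for the two
   families gives the inequality on D_{m+1}^{n+1} from the one on D_m^n, and
   taking the second family to be zero gives the converse: the two constants
   are in fact equal. *)

Lemma mem_Dmn m n k j :
  ((k, j) \in Dmn m n) = (m <= k <= n)%N && (0 < j <= 2 ^ k.-1)%N.
Proof.
apply/allpairsPdep/idP => [[k' [j' [+ + [-> ->]]]]|/andP[km jk]].
  by rewrite !mem_iota; lia.
by exists k, j; rewrite !mem_iota; split => //; lia.
Qed.

Lemma big_Dmn_succ {V : nmodType} (F : nat -> nat -> V) m n : (0 < m)%N ->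
  \sum_(kj <- Dmn m.+1 n.+1) F kj.1 kj.2 =
  \sum_(kj <- Dmn m n) F kj.1.+1 kj.2 +
  \sum_(kj <- Dmn m n) F kj.1.+1 (kj.2 + 2 ^ kj.1.-1)%N.
Proof.
move=> m_gt0; rewrite /Dmn !big_allpairs_dep /= subSS.
rewrite -[m.+1]add1n iotaDl big_map -big_split /= !big_seq.
apply: eq_bigr => k; rewrite mem_iota => /andP[mk _].
have -> : (2 ^ (1 + k).-1 = 2 ^ k.-1 + 2 ^ k.-1)%N.
  by rewrite add1n addnn -mul2n -expnS prednK //; lia.
rewrite iotaD big_cat /= add1n; congr (_ + _).
by rewrite addnC iotaDl big_map; apply: eq_bigr => j _; rewrite addnC.
Qed.

Section haar_functions.
Context {R : realType}.
Implicit Types (k i j : nat) (t : R).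

Lemma in_dyadicS k i t : in_dyadic k.+1 i t = in_dyadic k i (2 * t).
Proof.
have pow_gt0 : (0 : R) < 2 ^+ k by rewrite exprn_gt0.
rewrite /in_dyadic exprS !ler_pdivrMr ?mulr_gt0 // !ltr_pdivlMr ?mulr_gt0 //.
by rewrite mulrA [t * 2]mulrC.
Qed.

Lemma haarS k j t : (0 < k)%N -> haar k.+1 j t = Num.sqrt 2 * haar k j (2 * t).
Proof.
move=> k_gt0; rewrite /haar !in_dyadicS /= -(prednK k_gt0) exprS sqrtrM ?ler0n //.
by case: ifP => _; [|case: ifP => _]; rewrite ?mulrN ?mulr0.
Qed.

Lemma in_dyadic_shift k i t : (0 < i)%N ->
  in_dyadic k (i + 2 ^ k) t = in_dyadic k i (t - 1).
Proof.
move=> i_gt0; have pow_gt0 : (0 : R) < 2 ^+ k by rewrite exprn_gt0.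
rewrite /in_dyadic.
have -> : (i + 2 ^ k).-1 = (i.-1 + 2 ^ k)%N by lia.
rewrite !natrD !natrX !ler_pdivrMr // !ltr_pdivlMr // mulrBl mul1r.
by rewrite lerBrDr ltrBlDr.
Qed.

Lemma haar_shift k j t : (0 < k)%N -> (0 < j)%N ->
  haar k (j + 2 ^ k.-1) t = haar k j (t - 1).
Proof.
move=> k_gt0 j_gt0; have pow2E : (2 ^ k = 2 * 2 ^ k.-1)%N by rewrite -expnS prednK.
rewrite /haar.
have -> : (2 * (j + 2 ^ k.-1) - 1 = (2 * j - 1) + 2 ^ k)%N by lia.
have -> : (2 * (j + 2 ^ k.-1) = 2 * j + 2 ^ k)%N by lia.
by rewrite !in_dyadic_shift //; lia.
Qed.

Lemma lt0_in_dyadic k i t : t < 0 -> in_dyadic k i t = false.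
Proof.
move=> t_lt0; apply/negbTE; rewrite negb_and -ltNge; apply/orP; left.
by apply: (lt_le_trans t_lt0); rewrite divr_ge0 // exprn_ge0.
Qed.

Lemma lt0_haar k j t : t < 0 -> haar k j t = 0.
Proof. by move=> t_lt0; rewrite /haar !lt0_in_dyadic. Qed.

Lemma ge1_in_dyadic k i t : (i <= 2 ^ k)%N -> 1 <= t -> in_dyadic k i t = false.
Proof.
move=> ik t_ge1; apply/negbTE; rewrite negb_and -leNgt; apply/orP; right.
apply: le_trans t_ge1; rewrite ler_pdivrMr ?exprn_gt0 // mul1r -natrX.
by rewrite ler_nat.
Qed.

Lemma ge1_haar k j t : (0 < k)%N -> (j <= 2 ^ k.-1)%N -> 1 <= t -> haar k j t = 0.
Proof.
move=> k_gt0 jk t_ge1; have pow2E : (2 ^ k = 2 * 2 ^ k.-1)%N by rewrite -expnS prednK.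
by rewrite /haar !ge1_in_dyadic //; lia.
Qed.

End haar_functions.

Section haar_measurability.
Context {R : realType} {Y : normedModType R}.

Lemma measurable_in_dyadic k i : measurable_fun setT (fun t : R => in_dyadic k i t).
Proof.
apply: measurable_and.
  by apply: measurable_fun_ler; [exact: measurable_cst|exact: measurable_id].
by apply: measurable_fun_ltr; [exact: measurable_id|exact: measurable_cst].
Qed.

Lemma measurable_fun_haar_sum (F : seq (nat * nat)) (w : nat * nat -> Y)
    (g : Y -> R) :
  measurable_fun setT (fun t : R => g (\sum_(kj <- F) haar kj.1 kj.2 t *: w kj)).
Proof.
elim: F g => [|kj F IH] g.
  by under eq_fun do rewrite big_nil; exact: measurable_cst.
set S := fun t => \sum_(kj <- F) haar kj.1 kj.2 t *: w kj.
under eq_fun => t do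
  rewrite big_cons -/(S t) /haar !(fun_if (fun r => g (r *: w kj + S t))).
by do 2?[apply: measurable_fun_ifT; first exact: measurable_in_dyadic];
  exact: (IH (g \o +%R _)).
Qed.

End haar_measurability.

Section affine_change_of_variables.
Context {R : realType}.
Local Notation mu := (@lebesgue_measure R).
Variables (c a : R).
Hypothesis c_gt0 : 0 < c.

Lemma measurable_affine :
  measurable_fun setT ((fun t => c * t - a) : R -> measurableTypeR R).
Proof.
apply: measurable_funD; last exact: measurable_cst.
by apply: measurable_funM; [exact: measurable_cst|exact: measurable_id].
Qed.

Lemma affine_preimage_itvbndbnd ba x bb y :
  (fun t => c * t - a) @^-1` [set` Interval (BSide ba x) (BSide bb y)] =
  [set` Interval (BSide ba ((x + a) / c)) (BSide bb ((y + a) / c))].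
Proof.
apply/seteqP; split=> t /=; rewrite !in_itv /=;
  by rewrite lteif_pdivrMr // lteif_pdivlMr // lteifBrDr lteifBlDr ![t * c]mulrC.
Qed.

(* The measure instance of [pushforward] takes the measurability proof as an
   argument, so it cannot be inferred and has to be named. *)
Let image_measure :=
  measure_function_pushforward__canonical__measure_function_Measure
    mu measurable_affine.

Let scaled_image_measure := mscale (NngNum (ltW c_gt0)) image_measure.

Lemma lebesgue_measure_affine (A : set R) : measurable A ->
  mu A = (c%:E * mu ((fun t => c * t - a)%R @^-1` A))%E.
Proof.
move=> mA; apply: (lebesgue_measure_unique (mu := scaled_image_measure)) => //.
move=> _ [[x y]] _ <-.
rewrite /= /mscale /image_measure /= /pushforward affine_preimage_itvbndbnd.
rewrite !lebesgue_measure_itv /= !lte_fin ltr_pM2r ?invr_gt0 // ltrD2r.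
case: ifP => _; last by rewrite mule0.
by rewrite -!EFinB -EFinM; congr (_%:E); field; rewrite gt_eqF.
Qed.

Lemma ge0_integral_affine (A : set R) (g : R -> \bar R) : measurable A ->
  measurable_fun setT g -> (forall u, (0 <= g u)%E) ->
  (\int[mu]_(u in A) g u =
   \int[mu]_(t in (fun t => c * t - a)%R @^-1` A) (c%:E * g (c * t - a)%R))%E.
Proof.
move=> mA mg g_ge0.
rewrite (eq_measure_integral scaled_image_measure); last first.
  by move=> B mB _; exact: lebesgue_measure_affine.
have mgA : measurable_fun A g by exact: measurable_funS mg.
rewrite ge0_integral_mscale //= ge0_integral_pushforward //=;
  last exact: measurable_affine.
have mphiA : measurable ((fun t => c * t - a) @^-1` A).
  by rewrite -[X in measurable X]setTI; exact: measurable_affine.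
rewrite ge0_integralZl_EFin ?(ltW c_gt0) //.
exact: measurable_funS (measurableT_comp mg measurable_affine).
Qed.

End affine_change_of_variables.

Section haar_sums.
Context {R : realType} {X Y : normedModType R} (T : X -> Y).
Local Notation mu := (@lebesgue_measure R).
Implicit Types (F : seq (nat * nat)) (x : nat -> nat -> X).

Definition haar_sum F x (t : R) : Y :=
  \sum_(kj <- F) haar kj.1 kj.2 t *: T (x kj.1 kj.2).

Definition haar_norm2 F x : \bar R :=
  \int[mu]_(t in `[0%R, 1%R[) (`|haar_sum F x t| ^+ 2)%:E.

Definition lhalf x k j := x k.+1 j.
Definition rhalf x k j := x k.+1 (j + 2 ^ k.-1)%N.

Lemma haar_ineqE F c : haar_ineq T F c <->
  forall x, (haar_norm2 F x <= (c ^+ 2 * \sum_(kj <- F) `|x kj.1 kj.2| ^+ 2)%:E)%E.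
Proof.
have sqr_sqrt_sum x : Num.sqrt (\sum_(kj <- F) `|x kj.1 kj.2| ^+ 2) ^+ 2 =
    \sum_(kj <- F) `|x kj.1 kj.2| ^+ 2.
  by rewrite sqr_sqrtr // sumr_ge0 // => kj _; rewrite sqr_ge0.
by split=> ineq x; have := ineq x; rewrite exprMn sqr_sqrt_sum.
Qed.

Lemma eq_haar_norm2 F x z : {in F, forall kj, x kj.1 kj.2 = z kj.1 kj.2} ->
  haar_norm2 F x = haar_norm2 F z.
Proof.
move=> xz; rewrite /haar_norm2 /haar_sum; apply: eq_integral => t _.
by rewrite !big_seq; congr (`|_| ^+ 2)%:E; apply: eq_bigr => kj /xz ->.
Qed.

Lemma haar_norm2_eq0 F x : T 0 = 0 -> {in F, forall kj, x kj.1 kj.2 = 0} ->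
  haar_norm2 F x = 0%E.
Proof.
move=> T0 x0; rewrite /haar_norm2 /haar_sum; apply: integral0_eq => t _.
by rewrite big_seq big1 ?normr0 ?expr0n // => kj /x0 ->; rewrite T0 scaler0.
Qed.

Lemma lt0_haar_sum F x t : t < 0 -> haar_sum F x t = 0.
Proof. by move=> t_lt0; apply: big1 => kj _; rewrite lt0_haar ?scale0r. Qed.

Lemma ge1_haar_sum_Dmn m n x t : (0 < m)%N -> 1 <= t -> haar_sum (Dmn m n) x t = 0.
Proof.
move=> m_gt0 t_ge1; rewrite /haar_sum big_seq big1 // => -[k j].
rewrite mem_Dmn => /andP[/andP[mk _] /andP[_ jk]] /=.
by rewrite ge1_haar ?scale0r //; lia.
Qed.

Lemma haar_sum_Dmn_succ m n x t : (0 < m)%N ->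
  haar_sum (Dmn m.+1 n.+1) x t =
  Num.sqrt 2 *: (haar_sum (Dmn m n) (lhalf x) (2 * t) +
                 haar_sum (Dmn m n) (rhalf x) (2 * t - 1)).
Proof.
move=> m_gt0; rewrite /haar_sum (big_Dmn_succ (fun k j => haar k j t *: T (x k j))) //.
rewrite scalerDr !scaler_sumr !big_seq; congr (_ + _); apply: eq_bigr => -[k j];
  rewrite mem_Dmn => /andP[/andP[mk _] /andP[j_gt0 _]] /=;
  rewrite haarS ?haar_shift ?scalerA //; lia.
Qed.

Lemma measurable_sqr_norm_haar_sum F x :
  measurable_fun setT (fun t : R => `|haar_sum F x t| ^+ 2).
Proof. exact: (measurable_fun_haar_sum _ _ (fun y : Y => `|y| ^+ 2)). Qed.

Lemma haar_norm2_Dmn_succ m n x : (0 < m)%N ->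
  haar_norm2 (Dmn m.+1 n.+1) x =
  (haar_norm2 (Dmn m n) (lhalf x) + haar_norm2 (Dmn m n) (rhalf x))%E.
Proof.
move=> m_gt0.
have sqr_normE t : `|haar_sum (Dmn m.+1 n.+1) x t| ^+ 2 =
    2 * `|haar_sum (Dmn m n) (lhalf x) (2 * t) +
          haar_sum (Dmn m n) (rhalf x) (2 * t - 1)| ^+ 2.
  by rewrite haar_sum_Dmn_succ // normrZ ger0_norm ?sqrtr_ge0 // exprMn sqr_sqrtr ?ler0n.
have change z (a : R) : (haar_norm2 (Dmn m n) z =
    \int[mu]_(t in `[(a / 2)%R, ((1 + a) / 2)%R[)
      (2 * `|haar_sum (Dmn m n) z (2 * t - a)| ^+ 2)%:E)%E.
  rewrite /haar_norm2 (@ge0_integral_affine _ 2 a) //; last first.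
    by apply/measurable_EFinP; exact: measurable_sqr_norm_haar_sum.
  rewrite affine_preimage_itvbndbnd //= add0r.
  by apply: eq_integral => t _; rewrite EFinM.
have halves : `[0%R, 1%R[%classic =
    `[(0 / 2)%R, ((1 + 0) / 2)%R[ `|` `[(1 / 2)%R, ((1 + 1) / 2)%R[ :> set R.
  apply/seteqP; split => t /=; rewrite !in_itv /=; last by case=> /andP[]; lra.
  by move=> /andP[t_ge0 t_lt1]; case: (ltP t (1 / 2)) => ?; [left|right]; lra.
rewrite (change _ 0) (change _ 1) /haar_norm2 halves ge0_integral_setU //=; first last.
- by rewrite /disj_set; apply/eqP/seteqP; split=> // t [] /=; rewrite !in_itv /=; lra.
- by apply/measurable_EFinP; exact: measurable_funS (measurable_sqr_norm_haar_sum _ _).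
congr (_ + _); apply: eq_integral => t; rewrite inE /= in_itv /= => /andP[t_ge t_lt].
  by rewrite sqr_normE subr0 (lt0_haar_sum _ (rhalf x)) ?addr0 //; lra.
by rewrite sqr_normE (ge1_haar_sum_Dmn _ _ (lhalf x)) ?add0r //; lra.
Qed.

Lemma haar_ineq_Dmn_succ m n c : (0 < m)%N ->
  haar_ineq T (Dmn m n) c -> haar_ineq T (Dmn m.+1 n.+1) c.
Proof.
move=> m_gt0 /haar_ineqE ineq; apply/haar_ineqE => x.
rewrite haar_norm2_Dmn_succ // (big_Dmn_succ (fun k j => `|x k j| ^+ 2)) //.
by rewrite mulrDr EFinD leeD.
Qed.

Lemma haar_ineq_Dmn_pred m n c : T 0 = 0 -> (0 < m)%N ->
  haar_ineq T (Dmn m.+1 n.+1) c -> haar_ineq T (Dmn m n) c.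
Proof.
move=> T0 m_gt0 /haar_ineqE ineq; apply/haar_ineqE => z.
(* z becomes the left-half family of x, whose right-half family vanishes. *)
pose x k j := if (j <= 2 ^ k.-2)%N then z k.-1 j else 0.
have lhalfE : {in Dmn m n, forall kj, lhalf x kj.1 kj.2 = z kj.1 kj.2}.
  by move=> [k j]; rewrite mem_Dmn /lhalf /x /= => /andP[_ /andP[_ ->]].
have rhalf0 : {in Dmn m n, forall kj, rhalf x kj.1 kj.2 = 0}.
  move=> [k j]; rewrite mem_Dmn /rhalf /x /= => /andP[_ /andP[j_gt0 _]].
  by rewrite ifN // -ltnNge; lia.
have sum_lhalf : \sum_(kj <- Dmn m n) `|lhalf x kj.1 kj.2| ^+ 2 =
    \sum_(kj <- Dmn m n) `|z kj.1 kj.2| ^+ 2.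
  by rewrite !big_seq; apply: eq_bigr => kj /lhalfE ->.
have sum_rhalf : \sum_(kj <- Dmn m n) `|rhalf x kj.1 kj.2| ^+ 2 = 0.
  by rewrite big_seq big1 // => kj /rhalf0 ->; rewrite normr0 expr0n.
have := ineq x.
rewrite haar_norm2_Dmn_succ // (big_Dmn_succ (fun k j => `|x k j| ^+ 2)) //.
rewrite (eq_haar_norm2 _ _ _ lhalfE) (haar_norm2_eq0 _ _ T0 rhalf0) adde0.
by rewrite sum_lhalf sum_rhalf addr0.
Qed.

Lemma tau_Dmn_succ m n : T 0 = 0 -> (0 < m)%N ->
  tau T (Dmn m.+1 n.+1) = tau T (Dmn m n).
Proof.
move=> T0 m_gt0; rewrite /tau; congr inf; apply/seteqP.
by split=> c [c_ge0 ineq]; split=> //;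
  [exact: haar_ineq_Dmn_pred | exact: haar_ineq_Dmn_succ].
Qed.

End haar_sums.

Theorem proposition3p1 (R : realType) (X Y : completeNormedModType R)
  (T : {linear X -> Y}) (m n : nat) :
  (1 <= m)%N -> (m <= n)%N -> bounded_op T ->
  tau T (Dmn m.+1 n.+1) <= tau T (Dmn m n).
Proof. by move=> m_gt0 _ _; rewrite tau_Dmn_succ ?linear0. Qed.
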